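(* Let $X$ be a locally compact, Hausdorff, second countable space. Then $(\Gamma(X),\tau_{co})$ is a second countable space.
   Context: $\Gamma(X)$ denotes the set of all homeomorphisms $f:\mathrm{dom}(f)\to\mathrm{im}(f)$ between open subsets $\mathrm{dom}(f),\mathrm{im}(f)$ of $X$ (including the empty function $\emptyset$); it is an inverse semigroup under partial composition. The topology $\tau_{co}$ on $\Gamma(X)$ is the topology generated by the subbasic sets $\langle K,V\rangle=\{f\in\Gamma(X): K\subseteq\mathrm{dom}(f)\text{ and } f(K)\subseteq V\}$, where $K$ ranges over compact subsets of $X$ and $V$ over open subsets of $X$. *)

From HB Require Import structures.
From mathcomp Require Import all_boot all_order all_algebra.
From mathcomp Require Import all_classical all_reals all_analysis.
Set Implicit Arguments. Unset Strict Implicit. Unset Printing Implicit Defensive.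
Local Open Scope classical_set_scope.

Section PartialHomeo.
Context {X : topologicalType}.

(* A partial homeomorphism of X is represented by its graph G : set (X * X).
   G is the graph of a homeomorphism between open subsets U = dom and V = im:
   G = {(x, f x) | x in U} = {(g y, y) | y in V}, with f continuous on U and
   g continuous on V (so f restricted to U and g restricted to V are mutually
   inverse homeomorphisms U <-> V). *)
Definition is_partial_homeo (G : set (X * X)) : Prop :=
  exists (U V : set X) (f g : X -> X),
    [/\ open U /\ open V,
        (forall x y, G (x, y) <-> U x /\ f x = y),
        (forall x y, G (x, y) <-> V y /\ g y = x),
        {within U, continuous f} & {within V, continuous g}].

Definition Gamma : Type := {G : set (X * X) | is_partial_homeo G}.

Definition pdom (f : Gamma) : set X := [set x | exists y, proj1_sig f (x, y)].

Definition co_subbasic (KV : set X * set X) : set Gamma :=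
  [set f | KV.1 `<=` pdom f /\
           (forall x y, KV.1 x -> proj1_sig f (x, y) -> KV.2 y)].

Definition co_index : set (set X * set X) := [set KV | compact KV.1 /\ open KV.2].

End PartialHomeo.

Arguments Gamma : clear implicits.

Definition Gamma_co (X : topologicalType) : Type := Gamma X.

HB.instance Definition _ (X : topologicalType) := gen_eqMixin (Gamma_co X).
HB.instance Definition _ (X : topologicalType) := gen_choiceMixin (Gamma_co X).
HB.instance Definition _ (X : topologicalType) :=
  @isSubBaseTopological.Build (Gamma_co X) (set X * set X)%type
    (@co_index X) (@co_subbasic X).

From HB Require Import structures.
From mathcomp Require Import all_boot all_order all_algebra.
From mathcomp Require Import all_classical all_reals all_analysis.
From mathcomp Require Import finmap.
Local Open Scope classical_set_scope.

(* Fix a countable basis B of X.  Since X is locally compact Hausdorff, every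
   point has arbitrarily small basic neighbourhoods A with compact closure.
   If f lies in <K, V>, cover K by finitely many such A, chosen so that
   cl A lies in dom f and f (cl A) lies in a basic W contained in V; then f
   lies in the intersection of the corresponding <cl A, W>, which is contained
   in <K, V>.  Hence the finite intersections of the countably many sets
   <cl A, W> (A, W in B, cl A compact) form a basis of tau_co. *)

Lemma finI_fromT (I : choiceType) T (D : set I) (b : I -> set T) :
  finI_from D b setT.
Proof. by exists fset0%fset => //; rewrite set_fset0 bigcap_set0. Qed.

Lemma sub_finI_from (I : choiceType) T (D S : set I) (b : I -> set T) :
  S `<=` D -> finI_from S b `<=` finI_from D b.
Proof.
by move=> SD _ [E ES <-]; exists E => // i /ES /set_mem /SD /mem_set.
Qed.

Lemma finI_from_bigcap (I J : choiceType) T (D : set I) (b : I -> set T)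
    (E : {fset J}) (G : J -> set T) :
  (forall j, j \in E -> finI_from D b (G j)) ->
  finI_from D b (\bigcap_(j in [set` E]) G j).
Proof.
move=> EG; rewrite bigcap_fset big_seq.
by apply: big_ind => //; [exact: finI_fromT | exact: finI_fromI].
Qed.

Lemma finI_from_refine {I : choiceType} {T} {D S : set I} {b : I -> set T}
    {t : T} {A : set T} :
  (forall i, D i -> b i t -> exists2 G, finI_from S b G & G t /\ G `<=` b i) ->
  finI_from D b A -> A t -> exists2 G, finI_from S b G & G t /\ G `<=` A.
Proof.
move=> refine_b [E ED <-] Et.
have pick i : exists G, i \in E -> [/\ finI_from S b G, G t & G `<=` b i].
  have [iE|] := boolP (i \in E); last by exists setT.
  have [G SG [Gt Gb]] := refine_b i (set_mem (ED i iE)) (Et i iE).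
  by exists G.
have [G HG] := choice pick.
exists (\bigcap_(i in [set` E]) G i).
  by apply: finI_from_bigcap => i /HG [].
by split=> [i /HG [] | s GEs i iE] //; have [_ _] := HG i iE; apply; exact: GEs.
Qed.

Lemma compact_cover_compact (T : topologicalType) (A : set T) :
  compact A -> cover_compact A.
Proof.
(* compact_cover needs a pointed space; a nonempty A provides the point. *)
move=> cA; have [->|/set0P [a _]] := eqVneq A set0.
  by move=> I D f _ _; exists fset0%fset.
pose Tp : ptopologicalType :=
  HB.pack_for ptopologicalType T (isPointed.Build T a).
by rewrite -[cover_compact A]/(@cover_compact Tp A) -compact_cover.
Qed.

Section co_subbasic.
Context {X : topologicalType}.

Lemma co_subbasicE {f : Gamma X} {U : set X} {fn : X -> X} {K V : set X} :
  (forall x y, proj1_sig f (x, y) <-> U x /\ fn x = y) ->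
  co_subbasic (K, V) f <-> K `<=` U /\ K `<=` fn @^-1` V.
Proof.
move=> graph; split=> [[/= Kdom KV]|[KU KV]]; split=> //=.
- by move=> x /Kdom [y /graph []].
- move=> x Kx; apply: (KV x (fn x) Kx); apply/graph; split=> //.
  by have [y /graph []] := Kdom x Kx.
- by move=> x Kx; exists (fn x); apply/graph; split=> //; apply: KU.
- by move=> x y Kx /graph [_ <-]; apply: KV.
Qed.

Lemma co_subbasic_cover {f : Gamma X} {K V : set X} {I : Type} {D : set I}
    {C W : I -> set X} :
  K `<=` \bigcup_(i in D) C i -> (forall i, D i -> W i `<=` V) ->
  (forall i, D i -> co_subbasic (C i, W i) f) -> co_subbasic (K, V) f.
Proof.
move=> KC WV fCW; split=> /= [x /KC [i Di Cix] | x y /KC [i Di Cix] fxy].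
  by have [Cdom _] := fCW i Di; apply: Cdom.
by have [_ CW] := fCW i Di; apply: (WV i Di); apply: CW fxy.
Qed.

Lemma Gamma_co_basis (S : set (set X * set X)) : S `<=` co_index ->
  (forall KV (f : Gamma X), co_index KV -> co_subbasic KV f ->
     exists2 G, finI_from S co_subbasic G & G f /\ G `<=` co_subbasic KV) ->
  basis (finI_from S co_subbasic : set (set (Gamma_co X))).
Proof.
move=> Sco refine_co; split.
  move=> G SG; exists [set G]; last exact: bigcup_set1.
  by move=> _ ->; apply: sub_finI_from SG.
move=> f W; rewrite nbhsE => -[U [ [Us Us_fin <-] [A UsA Af] ] UW].
have coA : finI_from co_index co_subbasic A := Us_fin A UsA.
have [G SG [Gf GA]] := finI_from_refine (refine_co ^~ f) coA Af.
by exists G => // g /GA Ag; apply: UW; exists A.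
Qed.

End co_subbasic.

Section locally_compact_basis.
Variables (X : topologicalType) (B : set (set X)).
Hypotheses (lcX : locally_compact [set: X]) (hsX : hausdorff_space X)
  (basisB : basis B).

Lemma basis_compact_closure {x : X} {N : set X} : nbhs x N ->
  exists2 A, B A & [/\ A x, compact (closure A) & closure A `<=` N].
Proof.
move=> xN; have [C xC [cC clC]] : compact_near (nbhs x).
  by have := lcX x I; rewrite withinET.
have [M xM clMN] := compact_regular hsX cC xC xN.
have [A [BA Ax] AMC] := basisB.2 x (M `&` C) (filterI xM xC).
exists A => //; split => //.
- apply: subclosed_compact cC _; first exact: closed_closure.
  by rewrite closureE; apply: smallest_sub clC _ => y /AMC [].
- by apply: subset_trans clMN; apply: closureS => y /AMC [].
Qed.

Definition basic_co_index : set (set X * set X) :=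
  [set (closure AW.1, AW.2) |
    AW in [set AW | [/\ B AW.1, B AW.2 & compact (closure AW.1)]]].

Lemma basic_co_index_sub : basic_co_index `<=` co_index.
Proof. by move=> _ [[A W] [/= _ BW cA] <-]; split=> //; apply: basisB.1. Qed.

Lemma countable_basic_co_index : countable B -> countable basic_co_index.
Proof.
move=> cB; apply: (card_le_trans (card_image_le _ _)).
apply: (card_le_trans (subset_card_le (B := B `*` B) _)).
  by move=> AW [].
exact: countableX.
Qed.

Lemma continuous_basic_pair {U V : set X} {fn : X -> X} {x : X} :
  open U -> {within U, continuous fn} -> U x -> open V -> V (fn x) ->
  exists2 AW : set X * set X, [/\ B AW.1, B AW.2 & compact (closure AW.1)] &
    [/\ AW.1 x, closure AW.1 `<=` U, closure AW.1 `<=` fn @^-1` AW.2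
       & AW.2 `<=` V].
Proof.
move=> oU cfn Ux oV Vfx.
have [W [BW Wfx] WV] := basisB.2 (fn x) V (open_nbhs_nbhs (conj oV Vfx)).
have fn_cont_x : continuous_at x fn.
  by move: cfn; rewrite continuous_open_subspace //; apply; apply/mem_set.
have xN : nbhs x (U `&` fn @^-1` W).
  apply: filterI; first exact: open_nbhs_nbhs.
  by apply: fn_cont_x; apply: open_nbhs_nbhs; split=> //; apply: basisB.1.
have [A BA [Ax cA AN]] := basis_compact_closure xN.
by exists (A, W) => //=; split=> // y /AN [].
Qed.

Lemma co_subbasic_refine (f : Gamma X) (K V : set X) :
  compact K -> open V -> co_subbasic (K, V) f ->
  exists2 G, finI_from basic_co_index co_subbasic G &
    G f /\ G `<=` co_subbasic (K, V).
Proof.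
move=> cK oV; case: (proj2_sig f) => U [_ [fn [_ [[oU _] graph _ cfn _]]]].
rewrite (co_subbasicE graph) => -[KU KfV].
have pick x : exists AW : set X * set X, K x ->
    [/\ B AW.1, AW.1 x, basic_co_index (closure AW.1, AW.2),
        co_subbasic (closure AW.1, AW.2) f & AW.2 `<=` V].
  have [Kx|] := pselect (K x); last by exists (set0, set0).
  have [AW AWB [Ax clU clW WV]] :=
    continuous_basic_pair oU cfn (KU x Kx) oV (KfV x Kx).
  exists AW => _; split=> //; first by case: AWB.
    by exists AW.
  exact/(co_subbasicE graph).
have [e He] := choice pick.
have [E EK KE] : finite_subset_cover K (fun x => (e x).1) K.
  move/compact_cover_compact: cK; apply=> [x /He [/basisB.1] //|x Kx].
  by exists x => //; have [] := He x Kx.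
exists (\bigcap_(x in [set` E]) co_subbasic (closure (e x).1, (e x).2)).
  by apply: finI_from_bigcap => x /EK/set_mem/He [_ _ ? _ _]; apply: finI_from1.
split; first by move=> x /EK/set_mem/He [].
move=> h Eh; apply: (co_subbasic_cover (D := [set` E])
  (C := fun x => closure (e x).1) (W := fun x => (e x).2)) => //.
- by move=> y /KE [x Ex exy]; exists x => //; apply: subset_closure.
- by move=> x /EK/set_mem/He [].
Qed.

End locally_compact_basis.

Theorem mainTheorem1 (X : topologicalType) :
  locally_compact [set: X] -> hausdorff_space X -> @second_countable X ->
  @second_countable (Gamma_co X).
Proof.
move=> lcX hsX [B cB basisB].
exists (finI_from (basic_co_index X B) co_subbasic).
  exact/finI_from_countable/countable_basic_co_index.
apply: Gamma_co_basis; first exact: basic_co_index_sub.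
by move=> [K V] f [cK oV]; apply: co_subbasic_refine.
Qed.
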